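(* Let $G=\mathbb{Z}_2\times\mathbb{Z}_4$, let $\theta$ be a normalised orthomorphism of $G$, let $A_{22}=\{x\}$, put $y=\theta(x)$, and let $a\in A_{44}\setminus\theta(A_{44})$. Then $\theta$ has one of the following forms (in cycle notation): (i) $\theta=(a,\ ax,\ axy,\ xy,\ ay,\ x,\ y)$, where $xy=a^2$; (ii) $\theta=(a,\ ax,\ axy,\ xy)(y,\ ay,\ x)$, where $xy\neq a^2$; (iii) $\theta=(a,\ ax,\ axy,\ x,\ y)(ay,\ xy)$, where $xy\neq a^2$; (iv) $\theta=(a,\ ax,\ axy,\ x,\ y,\ ay,\ xy)$, where $xy=a^2$. Moreover, the number of normalised orthomorphisms of $G$ is $48$.
   Context: $G$ is written multiplicatively with identity $e$; $o(g)$ is the order of $g$. A normalised orthomorphism of $G$ is a bijection $\theta\colon G\to G$ with $\theta(e)=e$ such that $x\mapsto x^{-1}\theta(x)$ is also a bijection of $G$. For such $\theta$: $A_{44}=\{g: o(g)=4, o(\theta(g))=4\}$, $A_{22}=\{g: o(g)=2, o(\theta(g))=2\}$; $\theta(S)$ denotes the image of a set $S$. Cycle notation $(c_1,\dots,c_k)$ means $c_i\mapsto c_{i+1}$ and $c_k\mapsto c_1$; elements not listed (here only $e$) are fixed. *)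

From mathcomp Require Import all_boot all_fingroup all_algebra all_solvable.
Set Implicit Arguments. Unset Strict Implicit. Unset Printing Implicit Defensive.
Import GroupScope.
Local Open Scope group_scope.

Definition G : finGroupType := ('Z_2 * 'Z_4)%type.

Definition is_northo (theta : {perm G}) : bool :=
  (theta 1 == 1) && [exists sigma : {perm G}, [forall g, sigma g == g^-1 * theta g]].

Definition A44 (theta : {perm G}) : {set G} :=
  [set g | (#[g] == 4%N) && (#[theta g] == 4%N)].
Definition A22 (theta : {perm G}) : {set G} :=
  [set g | (#[g] == 2%N) && (#[theta g] == 2%N)].

(* Cycle notation: cycfun [:: c1; ...; ck] maps c_i to c_{i+1} and c_k to c_1,
   and fixes every element not listed. *)
Definition cycfun (s : seq G) (g : G) : G :=
  if g \in s then nth g s ((index g s).+1 %% size s) else g.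

From mathcomp Require Import all_boot all_fingroup all_algebra all_solvable.
From Stdlib Require Import FunctionalExtensionality.
Set Implicit Arguments. Unset Strict Implicit. Unset Printing Implicit Defensive.
Import GroupScope.
Local Open Scope group_scope.

(* G has only eight elements, so a map of G is determined by its table of
   values and the statement can be decided by running through the 8! tables of
   permutations of G, 48 of which are normalised orthomorphisms.  To make this
   a computation, element orders are read off from g^4 = 1, and "x |-> x^-1
   theta(x) is a bijection" becomes duplicate-freeness of its table. *)

Section Tables.

Variables (T : finType) (e : seq T).
Hypothesis e_enum : perm_eq e (enum T).

Definition tabulate (f : T -> T) : seq T := map f e.

(* The default value of [nth] is never reached on tables of size #|T|. *)
Definition lookup (t : seq T) (x : T) : T := nth x t (index x e).

Lemma mem_enum_seq x : x \in e.
Proof. by rewrite (perm_mem e_enum) mem_enum. Qed.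

Lemma uniq_enum_seq : uniq e.
Proof. by rewrite (perm_uniq e_enum) enum_uniq. Qed.

Lemma lookup_tabulate f : lookup (tabulate f) = f.
Proof.
apply: functional_extensionality => x.
by rewrite /lookup (nth_map x) ?index_mem ?mem_enum_seq // nth_index ?mem_enum_seq.
Qed.

Lemma tabulate_perm_inj : injective (fun s : {perm T} => tabulate s).
Proof.
move=> s1 s2 /(congr1 lookup); rewrite !lookup_tabulate => eq_s.
by apply/permP => x; rewrite eq_s.
Qed.

Lemma mem_tabulate_perm (s : {perm T}) : tabulate s \in permutations e.
Proof.
rewrite mem_permutations; apply: uniq_perm => [||x].
- by rewrite map_inj_uniq ?uniq_enum_seq //; apply: perm_inj.
- exact: uniq_enum_seq.
- rewrite mem_enum_seq; apply/mapP.
  by exists (s^-1 x); rewrite ?mem_enum_seq ?permKV.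
Qed.

Lemma tabulate_perm_onto t : t \in permutations e -> exists s : {perm T}, t = tabulate s.
Proof.
rewrite mem_permutations => t_e.
have size_t : size t = size e by rewrite (perm_size t_e).
have index_lt x : (index x e < size t)%N by rewrite size_t index_mem mem_enum_seq.
have lookup_inj : injective (lookup t).
  move=> x1 x2; rewrite /lookup (set_nth_default x1 x2) //.
  move/eqP; rewrite nth_uniq ?(perm_uniq t_e) ?uniq_enum_seq // => /eqP eq_index.
  by rewrite -(nth_index x1 (mem_enum_seq x1)) eq_index nth_index ?mem_enum_seq.
have tabulate_lookup : tabulate (lookup t) = t.
  case: t t_e size_t index_lt {lookup_inj} => [|x0 t'] t_e size_t index_lt.
    by rewrite /tabulate (size0nil (esym size_t)).
  apply: (eq_from_nth (x0 := x0)) => [|i]; first by rewrite size_map size_t.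
  rewrite size_map => lt_i.
  rewrite (nth_map x0) // /lookup index_uniq ?uniq_enum_seq //.
  by apply: set_nth_default; rewrite size_t.
by exists (perm lookup_inj); rewrite -[LHS]tabulate_lookup; apply: eq_map => x; rewrite permE.
Qed.

Lemma card_perm_tabulate (P : pred (seq T)) :
  #|[set s : {perm T} | P (tabulate s)]| = count P (permutations e).
Proof.
have tables : perm_eq [seq tabulate s | s : {perm T}] (permutations e).
  apply: uniq_perm => [||t].
  - by rewrite map_inj_uniq ?enum_uniq //; apply: tabulate_perm_inj.
  - exact: permutations_uniq.
  apply/mapP/idP => [[s _ ->]|/tabulate_perm_onto [s ->]]; first exact: mem_tabulate_perm.
  by exists s; rewrite ?mem_enum.
rewrite -(seq.permP tables) count_map enumT cardsE cardE /enum_mem size_filter.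
by apply: eq_count.
Qed.

Lemma exists_perm_eqfunE (f : T -> T) :
  [exists s : {perm T}, [forall x, s x == f x]] = uniq (map f e).
Proof.
apply/existsP/idP => [[s /forallP eq_s]|uniq_f].
  rewrite (eq_map (g := s)) => [|x]; last by rewrite (eqP (eq_s x)).
  by rewrite map_inj_uniq ?uniq_enum_seq //; apply: perm_inj.
have f_inj : injective f.
  by apply/injectiveP; rewrite /injectiveb /dinjectiveb -(perm_uniq (perm_map f e_enum)).
by exists (perm f_inj); apply/forallP => x; rewrite permE.
Qed.

End Tables.

Lemma order_expg4 (gT : finGroupType) (g : gT) :
  g ^+ 4 = 1 -> #[g] = if g == 1 then 1%N else if g ^+ 2 == 1 then 2%N else 4%N.
Proof.
move=> g4; rewrite -order_eq1 -order_dvdn.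
have: (#[g] %| 4)%N by rewrite order_dvdn g4.
have: (0 < #[g])%N := order_gt0 g.
by case: #[g] => [|[|[|[|[|n]]]]] //= _ /dvdn_leq.
Qed.

(* [enum G] does not reduce under [vm_compute] (it is stuck on opaque proofs). *)
Definition elems : seq G := [seq (inZp i, inZp j) | i <- iota 0 2, j <- iota 0 4].

Lemma perm_elems : perm_eq elems (enum G).
Proof.
apply: uniq_perm => [||[i j]]; rewrite ?enum_uniq ?mem_enum //.
by apply/allpairsP; exists (val i, val j); rewrite !mem_iota /= !valZpK.
Qed.

Lemma expG4 (g : G) : g ^+ 4 = 1.
Proof.
apply/eqP; have /allP -> // : all (fun g : G => g ^+ 4 == 1) elems by vm_compute.
exact: mem_enum_seq perm_elems g.
Qed.

Definition orderG (g : G) : nat :=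
  if g == 1 then 1%N else if g ^+ 2 == 1 then 2%N else 4%N.

Lemma orderGE (g : G) : #[g] = orderG g.
Proof. exact/order_expg4/expG4. Qed.

Definition northo (f : G -> G) : bool :=
  (f 1 == 1) && uniq (map (fun g => g^-1 * f g) elems).

Lemma is_northoE (theta : {perm G}) : is_northo theta = northo theta.
Proof. by rewrite /is_northo (exists_perm_eqfunE perm_elems (fun g => g^-1 * theta g)). Qed.

Definition in22 (f : G -> G) (g : G) : bool := (orderG g == 2%N) && (orderG (f g) == 2%N).
Definition in44 (f : G -> G) (g : G) : bool := (orderG g == 4%N) && (orderG (f g) == 4%N).

Definition hypotheses (f : G -> G) (x a : G) : bool :=
  [&& all (fun g => in22 f g == (g == x)) elems, in44 f a
    & ~~ has (fun g => in44 f g && (f g == a)) elems].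

Definition eqfunb (f h : G -> G) : bool := all (fun g => f g == h g) elems.

Definition cycle_forms (f : G -> G) (x a : G) : bool :=
  let y := f x in
  [|| [&& eqfunb f (cycfun [:: a; a * x; a * x * y; x * y; a * y; x; y]),
          uniq [:: a; a * x; a * x * y; x * y; a * y; x; y] & x * y == a ^+ 2],
      [&& eqfunb f (cycfun [:: a; a * x; a * x * y; x * y] \o cycfun [:: y; a * y; x]),
          uniq [:: a; a * x; a * x * y; x * y; y; a * y; x] & x * y != a ^+ 2],
      [&& eqfunb f (cycfun [:: a; a * x; a * x * y; x; y] \o cycfun [:: a * y; x * y]),
          uniq [:: a; a * x; a * x * y; x; y; a * y; x * y] & x * y != a ^+ 2]
    | [&& eqfunb f (cycfun [:: a; a * x; a * x * y; x; y; a * y; x * y]),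
          uniq [:: a; a * x; a * x * y; x; y; a * y; x * y] & x * y == a ^+ 2]].

Definition classified (f : G -> G) : bool :=
  all (fun x => all (fun a => hypotheses f x a ==> cycle_forms f x a) elems) elems.

Definition northo_tables : seq (seq G) :=
  [seq t <- permutations elems | northo (lookup elems t)].

Lemma northo_tables_classified : all (fun t => classified (lookup elems t)) northo_tables.
Proof. by vm_compute. Qed.

Lemma size_northo_tables : size northo_tables = 48%N.
Proof. by vm_compute. Qed.

Lemma eqfunbP (f h : G -> G) : reflect (forall g, f g = h g) (eqfunb f h).
Proof.
apply: (iffP allP) => [eq_fh g|eq_fh g _]; last exact/eqP.
exact/eqP/eq_fh/(mem_enum_seq perm_elems).
Qed.

Lemma hypothesesP (theta : {perm G}) (x a : G) :
  A22 theta = [set x] -> a \in A44 theta :\: theta @: A44 theta -> hypotheses theta x a.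
Proof.
have in22E g : in22 theta g = (g \in A22 theta) by rewrite inE !orderGE.
have in44E g : in44 theta g = (g \in A44 theta) by rewrite inE !orderGE.
move=> A22_x /setDP [a44 a_new]; rewrite /hypotheses in44E a44.
apply/and3P; split=> //.
  by apply/allP => g _; rewrite in22E A22_x inE.
apply/hasPn => g _; rewrite in44E; apply/andP => -[g44 /eqP theta_g].
by rewrite -theta_g imset_f in a_new.
Qed.

Theorem theorem1 :
  (forall (theta : {perm G}) (x a : G),
      is_northo theta ->
      A22 theta = [set x] ->
      a \in A44 theta :\: (theta @: A44 theta) ->
      let y := theta x in
      ((forall g, theta g = cycfun [:: a; a * x; a * x * y; x * y; a * y; x; y] g)
        /\ uniq [:: a; a * x; a * x * y; x * y; a * y; x; y]
        /\ x * y = a ^+ 2)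
   \/ ((forall g, theta g = cycfun [:: a; a * x; a * x * y; x * y]
                                   (cycfun [:: y; a * y; x] g))
        /\ uniq [:: a; a * x; a * x * y; x * y; y; a * y; x]
        /\ x * y != a ^+ 2)
   \/ ((forall g, theta g = cycfun [:: a; a * x; a * x * y; x; y]
                                   (cycfun [:: a * y; x * y] g))
        /\ uniq [:: a; a * x; a * x * y; x; y; a * y; x * y]
        /\ x * y != a ^+ 2)
   \/ ((forall g, theta g = cycfun [:: a; a * x; a * x * y; x; y; a * y; x * y] g)
        /\ uniq [:: a; a * x; a * x * y; x; y; a * y; x * y]
        /\ x * y = a ^+ 2))
  /\ #|[set theta : {perm G} | is_northo theta]| = 48%N.
Proof.
have mem_elems g : g \in elems := mem_enum_seq perm_elems g.
split=> [theta x a northo_theta A22_x a_new y|].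
  have table_theta : tabulate elems theta \in northo_tables.
    rewrite is_northoE in northo_theta.
    by rewrite mem_filter (mem_tabulate_perm perm_elems) andbT (lookup_tabulate perm_elems).
  have := allP northo_tables_classified _ table_theta; rewrite (lookup_tabulate perm_elems).
  move=> /allP/(_ x (mem_elems x))/allP/(_ a (mem_elems a)).
  move=> /implyP/(_ (hypothesesP A22_x a_new)).
  case/or4P => /and3P [/eqfunbP eq_theta uniq_cycle xy].
  - by left; split; [exact: eq_theta | split; [exact: uniq_cycle | exact/eqP]].
  - by right; left; split; [exact: eq_theta | split; [exact: uniq_cycle | exact: xy]].
  - by right; right; left; split; [exact: eq_theta | split; [exact: uniq_cycle | exact: xy]].
  - by right; right; right; split; [exact: eq_theta | split; [exact: uniq_cycle | exact/eqP]].
rewrite -size_northo_tables size_filter -(card_perm_tabulate perm_elems).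
by apply: eq_card => theta; rewrite !inE (lookup_tabulate perm_elems) is_northoE.
Qed.
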